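(* Let $q$ be an odd prime power and $n=\frac{q^3+1}{2}$. For an integer $\delta$ with $1\le\delta-1\le\frac{q^2-1}{2}$ put $\epsilon=\lceil(\delta-1)(1-q^{-1})\rceil$. Then $\mathcal{C}_{(n,q,\delta,1)}$ has parameters $[n,k,d\ge\delta]$ and $\mathcal{C}_{(n,q,\delta+1,0)}$ has parameters $[n,k-1,d\ge2\delta]$, where $k=n-6\epsilon$ if $2\le\delta\le\frac{q^2-1}{2}-\frac{q-3}{2}$, and $k=n-6\epsilon+6\big(\delta-\frac{q^2-1}{2}+\lfloor\frac{q-2}{2}\rfloor\big)$ if $\frac{q^2-1}{2}-\frac{q-3}{2}<\delta\le\frac{q^2-1}{2}+1$.
   Context: Let $q$ be a prime power and $n\ge2$ an integer with $\gcd(n,q)=1$. Let $\ell=\mathrm{ord}_n(q)$, let $\alpha$ be a generator of $\mathbb{F}_{q^\ell}^*$, $\beta=\alpha^{(q^\ell-1)/n}$, and let $m_i(x)$ be the minimal polynomial of $\beta^i$ over $\mathbb{F}_q$. For integers $b\ge0$ and $2\le\delta\le n$, $\mathcal{C}_{(n,q,\delta,b)}$ denotes the cyclic (BCH) code of length $n$ over $\mathbb{F}_q$ with generator polynomial $\mathrm{lcm}(m_b(x),\dots,m_{b+\delta-2}(x))$. $[n,k,d\ge D]$ means length $n$, dimension $k$, minimum Hamming distance at least $D$. *)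

From HB Require Import structures.
From mathcomp Require Import all_boot all_order all_algebra all_field.
Set Implicit Arguments. Unset Strict Implicit. Unset Printing Implicit Defensive.
Import GRing.Theory.
Local Open Scope ring_scope.

(* least common multiple of polynomials over a field (defined up to a unit) *)
Definition lcmp (R : fieldType) (p q : {poly R}) : {poly R} := (p * q) %/ gcdp p q.

Section BCH.
Variables (F : finFieldType) (L : fieldExtType F) (n : nat) (beta : L).

(* m_i(x): minimal polynomial of beta^i over F (seen in {poly L}) *)
Definition minpol (i : nat) : {poly L} := minPoly 1%VS (beta ^+ i).

Definition bch_gen (delta b : nat) : {poly L} :=
  \big[@lcmp L/1]_(b <= i < b + delta - 1) minpol i.

Definition word_poly (c : 'rV[F]_n) : {poly L} :=
  map_poly (in_alg L) (\sum_(i < n) c ord0 i *: 'X^i).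

Definition bch_code (delta b : nat) : {set 'rV[F]_n} :=
  [set c : 'rV[F]_n | bch_gen delta b %| word_poly c].
End BCH.

Definition wt (F : finFieldType) (n : nat) (c : 'rV[F]_n) : nat :=
  #|[set i : 'I_n | c ord0 i != 0]|.

Definition min_dist_ge (F : finFieldType) (n : nat) (C : {set 'rV[F]_n}) (D : nat) :=
  forall c, c \in C -> c != 0 -> (D <= wt c)%N.

(* ceil((delta-1)(1 - 1/q)) = ceil((delta-1)(q-1)/q) *)
Definition eps (q delta : nat) : nat := ((delta - 1) * (q - 1) + q - 1) %/ q.

Definition kdim (q delta : nat) : int :=
  let n := ((q ^ 3 + 1) %/ 2)%N in
  let h := ((q ^ 2 - 1) %/ 2)%N in
  if (delta <= h - (q - 3) %/ 2)%N then (n%:Z - 6 * (eps q delta)%:Z)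
  else (n%:Z - 6 * (eps q delta)%:Z + 6 * (delta%:Z - h%:Z + ((q - 2) %/ 2)%:Z)).

(* Since 2n = q^3 + 1, q^3 = -1 and q^6 = 1 modulo n, so the defining set of
   C_(n,q,delta,1) is the union of the sets {i q^k mod n : k < 6}, 1 <= i < delta.
   Below (q^2-1)/2 these are the q-cyclotomic cosets of the integers i <= (q^2-q)/2
   not divisible by q: each has exactly six elements, distinct leaders give disjoint
   cosets, and every other exponent up to (q^2-1)/2 lies in the coset of a smaller
   leader (multiples of q by induction, the top range ((q^2-q)/2, (q^2-1)/2] as q^2
   times an explicit leader).  The generator is then the product of the X - beta^j
   over the defining set, a polynomial over F_q by Frobenius invariance, and counting
   leaders gives the dimension.  Both distance bounds are the BCH bound: for
   C_(n,q,delta+1,0), q^3 = -1 makes the defining set symmetric, so it contains the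
   2 delta - 1 consecutive exponents -(delta-1), ..., delta-1. *)

From HB Require Import structures.
From mathcomp Require Import all_boot all_order all_algebra all_field.
From mathcomp Require Import zify.
Import GRing.Theory.
Local Open Scope ring_scope.

Set Implicit Arguments. Unset Strict Implicit. Unset Printing Implicit Defensive.

Lemma modn_eq_rem d x t r : (r < d)%N -> x = (t * d + r)%N -> (x %% d = r)%N.
Proof. by move=> r_lt ->; rewrite modnMDl modn_small. Qed.

Section PolyLcm.
Variable R : fieldType.
Implicit Types p q r : {poly R}.

Lemma lcmpE p q : lcmp p q = p %/ gcdp p q * q.
Proof. by rewrite /lcmp divp_mulAC // dvdp_gcdl. Qed.

Lemma lcmp_neq0 p q : p != 0 -> q != 0 -> lcmp p q != 0.
Proof.
by move=> p0 q0; rewrite lcmpE mulf_neq0 // dvdp_div_eq0 ?dvdp_gcdl.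
Qed.

Lemma dvdp_lcm p q r : p != 0 -> q != 0 ->
  (lcmp p q %| r) = (p %| r) && (q %| r).
Proof.
move=> p0 q0; set g := gcdp p q.
have g0 : g != 0 by rewrite gcdp_eq0 negb_and p0.
have cop : coprimep (p %/ g) (q %/ g) by apply: coprimep_div_gcd; rewrite p0.
have Dp : p = p %/ g * g by rewrite divpK // dvdp_gcdl.
have Dq : q = q %/ g * g by rewrite divpK // dvdp_gcdr.
have lcm_sym : p %/ g * q = q %/ g * p by rewrite {1}Dq mulrCA -Dp.
rewrite lcmpE -/g; apply/idP/andP => [pq_r | [p_r /dvdpP [y Dr]]].
  by split; apply: dvdp_trans pq_r; [rewrite lcm_sym|]; apply: dvdp_mulIr.
rewrite Dr dvdp_mul2r //; rewrite Dr {1}Dp Dq mulrA dvdp_mul2r // in p_r.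
by rewrite (Gauss_dvdpl _ cop) in p_r.
Qed.

Lemma big_lcmp_neq0 (I : Type) (s : seq I) (f : I -> {poly R}) :
  (forall i, f i != 0) -> \big[@lcmp R/1]_(i <- s) f i != 0.
Proof.
move=> f0; apply: (big_ind (fun p : {poly R} => p != 0)) => //.
  exact: oner_neq0.
exact: lcmp_neq0.
Qed.

Lemma dvdp_big_lcmp (I : Type) (s : seq I) (f : I -> {poly R}) r :
  (forall i, f i != 0) ->
  (\big[@lcmp R/1]_(i <- s) f i %| r) = all (fun i => f i %| r) s.
Proof.
move=> f0; elim: s => [|i s IHs]; first by rewrite big_nil dvd1p.
by rewrite big_cons dvdp_lcm ?big_lcmp_neq0 // IHs.
Qed.

End PolyLcm.

Lemma rVpoly_sum (R : nzSemiRingType) n (c : 'rV[R]_n) :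
  rVpoly c = \sum_(i < n) c 0 i *: 'X^i.
Proof. by rewrite [rVpoly c]poly_def; apply: eq_bigr => i _; rewrite valK. Qed.

Lemma card_rV_multiples (F : finFieldType) n (g : {poly F}) :
  g != 0 -> (size g <= n.+1)%N ->
  #|[set c : 'rV[F]_n | g %| rVpoly c]| = (#|F| ^ (n - (size g).-1))%N.
Proof.
move=> g0 le_g_n; set m := (n - (size g).-1)%N.
have size_g_gt0 : (0 < size g)%N by rewrite size_poly_gt0.
have size_mul_le (h : {poly F}) : (size (g * h)%R <= n)%N = (size h <= m)%N.
  have [->|h0] := eqVneq h 0; first by rewrite mulr0 size_poly0.
  have := size_poly_gt0 h; rewrite h0 size_mul // /m -!subn1.
  move: (size g) (size h) le_g_n size_g_gt0 => sg sh *; apply/idP/idP; lia.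
pose mul_g (h : 'rV[F]_m) : 'rV[F]_n := poly_rV (g * rVpoly h).
have mul_gK h : rVpoly (mul_g h) = g * rVpoly h by rewrite poly_rV_K ?size_mul_le ?size_poly.
have mul_g_inj : injective mul_g.
  by move=> h1 h2 /(congr1 rVpoly); rewrite !mul_gK => /(mulfI g0) /(can_inj rVpolyK).
suff -> : [set c : 'rV[F]_n | g %| rVpoly c] = mul_g @: setT.
  by rewrite card_imset // cardsT card_mx mul1n.
apply/setP => c; rewrite inE; apply/idP/imsetP => [/dvdpP [h Dc] | [h _ ->]].
  have size_h : (size h <= m)%N by rewrite -size_mul_le mulrC -Dc size_poly.
  exists (poly_rV h) => //; apply: (can_inj rVpolyK).
  by rewrite mul_gK poly_rV_K // Dc mulrC.
by rewrite mul_gK dvdp_mulIl.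
Qed.

Section Frobenius.
Variables (F : finFieldType) (L : fieldExtType F).
Local Notation q := #|F|.
Local Notation lift := (map_poly (in_alg L)).

Definition frobq (x : L) : L := x ^+ q.

Lemma frobq_is_nmod_morphism : nmod_morphism frobq.
Proof.
have [p p_pr pFp] := finPcharP F.
have pLp : p \in [pchar L] by rewrite (pchar_lalg L).
have q_pnat : [pchar L].-nat q.
  by rewrite (eq_pnat _ (pcharf_eq pLp)) (card_pprimeChar pFp) pnatX pnat_id.
split=> [|x y]; last exact: exprDn_pchar.
by rewrite /frobq expr0n; case: q (finNzRing_gt1 F).
Qed.

Lemma frobq_is_monoid_morphism : monoid_morphism frobq.
Proof. by split=> [|x y]; rewrite /frobq ?expr1n // exprMn. Qed.

HB.instance Definition _ :=
  GRing.isNmodMorphism.Build L L frobq frobq_is_nmod_morphism.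
HB.instance Definition _ :=
  GRing.isMonoidMorphism.Build L L frobq frobq_is_monoid_morphism.

Lemma map_frobq_lift (r : {poly F}) : map_poly frobq (lift r) = lift r.
Proof.
rewrite -map_poly_comp; apply: eq_map_poly => a.
by rewrite /= /frobq -(rmorphXn (in_alg L)) expf_card.
Qed.

Lemma root_lift_expq (r : {poly F}) x :
  root (lift r) x -> root (lift r) (x ^+ q).
Proof.
by rewrite /root => /eqP rx; rewrite -[x ^+ q]/(frobq x) -map_frobq_lift horner_map rx rmorph0.
Qed.

Lemma root_lift_expqn (r : {poly F}) x k :
  root (lift r) x -> root (lift r) (x ^+ (q ^ k)).
Proof.
move=> rx; elim: k => [|k IHk]; first by rewrite expr1.
by rewrite expnSr exprM; apply: root_lift_expq.
Qed.

Lemma polyOver1_frobq (p : {poly L}) :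
  map_poly frobq p = p -> p \is a polyOver 1%VS.
Proof.
move=> frob_p; apply/polyOverP => i; rewrite -[1%VS]/(1%AS : {vspace L}).
by rewrite Fermat's_little_theorem dimv1 expn1 -[_ ^+ q]/(frobq _) -coef_map frob_p.
Qed.

End Frobenius.

Section ZerosCode.
Variables (F : finFieldType) (L : fieldExtType F) (n : nat) (beta : L).
Hypothesis prim : n.-primitive_root beta.
Local Notation q := #|F|.
Local Notation lift := (map_poly (in_alg L)).

Let n_gt0 : (0 < n)%N := prim_order_gt0 prim.

Lemma prim_expr_inj : injective (fun j : 'I_n => beta ^+ j).
Proof.
by move=> i j /eqP; rewrite (eq_prim_root_expr prim) !modn_small // => /eqP /val_inj.
Qed.

Definition mulq (j : 'I_n) : 'I_n := Ordinal (ltn_pmod (j * q) n_gt0).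

Lemma expr_mulq j : beta ^+ mulq j = frobq (beta ^+ j).
Proof. by rewrite /frobq /= (prim_expr_mod prim) exprM. Qed.

Lemma mulq_inj : injective mulq.
Proof.
move=> i j /(congr1 (fun k : 'I_n => beta ^+ k)); rewrite !expr_mulq.
by move/fmorph_inj/prim_expr_inj.
Qed.

Variable S : {set 'I_n}.
Local Notation G := (\prod_(j in S) ('X - (beta ^+ j)%:P)).

Lemma dvdp_prod_zeros p : (G %| p) = [forall j in S, root p (beta ^+ j)].
Proof.
rewrite -big_enum /= -(big_map (fun j : 'I_n => beta ^+ j) xpredT (fun z => 'X - z%:P)).
apply/idP/forall_inP => [G_p j jS | p_S].
  by apply: root_dvdp G_p _; rewrite root_prod_XsubC; apply: map_f; rewrite mem_enum.
apply: uniq_roots_dvdp; first by apply/allP => z /mapP [j]; rewrite mem_enum => /p_S pj ->.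
by rewrite uniq_rootsE (map_inj_uniq prim_expr_inj) ?enum_uniq.
Qed.

Hypothesis S_mulq : {in S, forall j, mulq j \in S}.

Lemma prod_zeros_polyOver1 : G \is a polyOver 1%VS.
Proof.
have mulqS j : (mulq j \in S) = (j \in S).
  have sub_S : mulq @: S \subset S by apply/subsetP => _ /imsetP [i /S_mulq ? ->].
  have /subset_cardP eq_S : #|mulq @: S| = #|S| by rewrite card_imset //; apply: mulq_inj.
  by rewrite -(eq_S sub_S) mem_imset //; apply: mulq_inj.
apply: polyOver1_frobq; rewrite rmorph_prod /=.
under eq_bigr => j _ do rewrite map_polyXsubC /= -expr_mulq.
by rewrite [RHS](reindex_inj mulq_inj); apply: eq_bigl => j; rewrite mulqS.
Qed.

Lemma card_zeros_code :
  #|[set c : 'rV[F]_n | [forall j in S, root (lift (rVpoly c)) (beta ^+ j)]]| =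
  (q ^ (n - #|S|))%N.
Proof.
have /polyOver1P [g Dg] := prod_zeros_polyOver1.
have size_g : size g = #|S|.+1.
  by rewrite -(size_map_poly (in_alg L)) -Dg -big_enum size_prod_XsubC cardE.
have g0 : g != 0 by rewrite -size_poly_gt0 size_g.
transitivity #|[set c : 'rV[F]_n | g %| rVpoly c]|.
  by apply: eq_card => c; rewrite !inE -dvdp_prod_zeros Dg dvdp_map.
rewrite card_rV_multiples // size_g //.
by rewrite ltnS -[n in (_ <= n)%N]card_ord max_card.
Qed.

End ZerosCode.

Lemma Vandermonde_unitmx (R : fieldType) w (a : 'rV[R]_w) :
  injective (a 0) -> Vandermonde w a \in unitmx.
Proof.
move=> a_inj; rewrite unitmxE det_Vandermonde unitfE.
apply/prodf_neq0 => i _; apply/prodf_neq0 => j lt_ij.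
by rewrite subr_eq0; apply: contraTneq lt_ij => /a_inj ->; rewrite ltnn.
Qed.

Section BCHBound.
Variables (F : finFieldType) (L : fieldExtType F) (n : nat) (beta : L).
Hypothesis prim : n.-primitive_root beta.
Local Notation lift := (map_poly (in_alg L)).

Lemma horner_lift_rVpoly (c : 'rV[F]_n) x :
  (lift (rVpoly c)).[x] = \sum_(i < n) in_alg L (c 0 i) * x ^+ i.
Proof.
rewrite rVpoly_sum rmorph_sum horner_sum; apply: eq_bigr => i _.
by rewrite /= map_polyZ map_polyXn hornerZ hornerXn.
Qed.

Lemma bch_bound (c : 'rV[F]_n) b D : c != 0 ->
  (forall t, (t < D.-1)%N -> root (lift (rVpoly c)) (beta ^+ (b + t))) ->
  (D <= wt c)%N.
Proof.
move=> c0 c_roots; rewrite leqNgt; apply/negP => wt_lt_D.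
set I := [set i : 'I_n | c 0 i != 0].
have /set0Pn [i0 i0I] : I != set0.
  apply: contraNneq c0 => /setP I0; apply/eqP/rowP => i; rewrite mxE.
  by have := I0 i; rewrite !inE => /negbFE/eqP.
pose e := @enum_val _ (mem I).
pose a : 'rV[L]_#|I| := \row_k beta ^+ e k.
pose x : 'cV[L]_#|I| := \col_k (in_alg L (c 0 (e k)) * beta ^+ (b * e k)).
have Vx : Vandermonde #|I| a *m x = 0.
  apply/colP => t; rewrite !mxE.
  have t_lt : (t < D.-1)%N by rewrite ltn_predRL (leq_ltn_trans (ltn_ord t) wt_lt_D).
  have /eqP := c_roots t t_lt.
  rewrite horner_lift_rVpoly (bigID (mem I)) /= [X in _ + X]big1 ?addr0; last first.
    by move=> i; rewrite inE negbK => /eqP ->; rewrite scale0r mul0r.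
  rewrite big_enum_val /= => sum0; rewrite -[RHS]sum0; apply: eq_bigr => k _.
  by rewrite !mxE /e -!exprM mulrCA -exprD mulnDl addnC [(_ * t)%N]mulnC.
have a_inj : injective (a 0) by move=> k l; rewrite !mxE => /(prim_expr_inj prim) /enum_val_inj.
have x0 : x = 0 by rewrite -(mulKmx (Vandermonde_unitmx a_inj) x) Vx mulmx0.
have beta0 : beta != 0 by rewrite (prim_root_eq0 prim) -lt0n (prim_order_gt0 prim).
have ci0 : c 0 i0 != 0 by rewrite inE in i0I.
have : x (enum_rank_in i0I i0) 0 = 0 by rewrite x0 mxE.
by apply/eqP; rewrite mxE /e enum_rankK_in // mulf_neq0 ?expf_neq0 ?fmorph_eq0.
Qed.

End BCHBound.

(* When q^m = 1 (mod n) this is the union of the q-cyclotomic cosets of b, ..., e-1. *)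
Definition coset_union (q n m b e : nat) : {set 'I_n} :=
  [set j : 'I_n | [exists i : 'I_e, (b <= i)%N &&
     [exists k : 'I_m, j == (i * q ^ k %% n)%N :> nat]]].

Section BCHCode.
Variables (F : finFieldType) (L : fieldExtType F) (n : nat) (beta : L).
Hypothesis prim : n.-primitive_root beta.
Local Notation q := #|F|.
Local Notation lift := (map_poly (in_alg L)).

Let n_gt0 : (0 < n)%N := prim_order_gt0 prim.

Lemma minpol_dvdp_lift (r : {poly F}) i :
  (minpol beta i %| lift r) = root (lift r) (beta ^+ i).
Proof.
apply/idP/idP => [|r_i]; first by move/root_dvdp; apply; apply: root_minPoly.
by apply: minPoly_dvdp r_i; apply/polyOver1P; exists r.
Qed.

Lemma bch_codeP delta b (c : 'rV[F]_n) :
  reflect (forall i, (b <= i < b + delta - 1)%N -> root (lift (rVpoly c)) (beta ^+ i))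
          (c \in bch_code n beta delta b).
Proof.
rewrite inE /bch_gen /word_poly -rVpoly_sum dvdp_big_lcmp; last first.
  by move=> i; rewrite monic_neq0 // monic_minPoly.
apply: (iffP allP) => [c_roots i b_i | c_roots i]; last first.
  by rewrite mem_index_iota minpol_dvdp_lift => /c_roots.
by rewrite -minpol_dvdp_lift; apply: c_roots; rewrite mem_index_iota.
Qed.

Lemma bch_code_min_dist delta b : min_dist_ge (bch_code n beta delta b) delta.
Proof.
move=> c /bch_codeP c_roots c0; apply: (bch_bound prim (b := b)) => // t t_lt.
by apply: c_roots; lia.
Qed.

Lemma bch_code0_min_dist_double m delta : (q ^ m %% n = n - 1)%N -> (delta <= n)%N ->
  min_dist_ge (bch_code n beta delta.+1 0) (2 * delta).
Proof.
move=> qm delta_le_n c /bch_codeP c_roots c0.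
have roots_lt i : (i < delta)%N -> root (lift (rVpoly c)) (beta ^+ i).
  by move=> i_lt; apply: c_roots; lia.
apply: (bch_bound prim (b := n - (delta - 1))) => // t t_lt.
have [le_t | lt_t] := leqP (delta - 1) t.
  rewrite (_ : n - (delta - 1) + t = n + (t - (delta - 1)))%N; last lia.
  by rewrite exprD (prim_expr_order prim) mul1r roots_lt //; lia.
set s := (delta - 1 - t)%N.
(* q^m = -1 (mod n): beta^(n-s) is the conjugate (beta^s)^(q^m) of a zero. *)
have -> : (n - (delta - 1) + t = s * q ^ m %% n)%N.
  rewrite -modnMmr qm (@modn_eq_rem _ _ (s - 1) (n - s)) /s; [lia | lia | nia].
by rewrite (prim_expr_mod prim) exprM root_lift_expqn // roots_lt // /s; lia.
Qed.

Lemma mulq_coset_union m b e : (0 < m)%N -> (q ^ m %% n = 1)%N ->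
  {in coset_union q n m b e, forall j, mulq prim j \in coset_union q n m b e}.
Proof.
move=> m_gt0 qm1 j; rewrite !inE => /existsP [i /andP [b_i /existsP [k /eqP Dj]]].
apply/existsP; exists i; rewrite b_i; apply/existsP.
have Djq : (j * q %% n = i * q ^ k.+1 %% n)%N by rewrite Dj modnMml expnSr mulnA.
have [k_lt_m | ] := ltnP k.+1 m; first by exists (Ordinal k_lt_m); rewrite /= Djq.
rewrite leq_eqVlt ltnNge ltn_ord orbF => /eqP Dm; exists (Ordinal m_gt0).
by rewrite /= Djq -Dm expn0 muln1 -modnMmr qm1 muln1.
Qed.

Lemma bch_code_coset_union m delta b : (0 < m)%N ->
  bch_code n beta delta b =
  [set c : 'rV[F]_n | [forall j in coset_union q n m b (b + delta - 1),
                        root (lift (rVpoly c)) (beta ^+ j)]].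
Proof.
move=> m_gt0; apply/setP => c; rewrite [RHS]inE.
apply/bch_codeP/forall_inP => [c_roots j | c_roots i /andP [b_i i_lt]].
  rewrite inE => /existsP [i /andP [b_i /existsP [k /eqP ->]]].
  by rewrite (prim_expr_mod prim) exprM; apply/root_lift_expqn/c_roots; rewrite b_i /=.
rewrite -(prim_expr_mod prim).
apply: (c_roots (Ordinal (ltn_pmod i n_gt0))); rewrite inE.
apply/existsP; exists (Ordinal i_lt); rewrite b_i; apply/existsP.
by exists (Ordinal m_gt0); rewrite /= expn0 muln1.
Qed.

Lemma card_bch_code m delta b : (0 < m)%N -> (q ^ m %% n = 1)%N ->
  #|bch_code n beta delta b| =
  (q ^ (n - #|coset_union q n m b (b + delta - 1)|))%N.
Proof.
move=> m_gt0 qm1; rewrite (bch_code_coset_union _ _ m_gt0).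
exact/card_zeros_code/mulq_coset_union.
Qed.

End BCHCode.

Local Open Scope nat_scope.

Lemma card_coset_union0 q n m d : 0 < m -> q ^ m %% n = 1 -> 0 < d <= n ->
  #|coset_union q n m 0 d| = #|coset_union q n m 1 d|.+1.
Proof.
move=> m_gt0 qm1 /andP [d_gt0 d_le_n]; have n_gt0 : 0 < n by lia.
pose z : 'I_n := Ordinal n_gt0.
have z_notin : z \notin coset_union q n m 1 d.
  rewrite inE; apply/existsP => -[i /andP [i_gt0 /existsP [k /eqP /esym iqk0]]].
  have : i * q ^ m %% n = 0.
    by rewrite -(subnKC (ltnW (ltn_ord k))) expnD mulnA -modnMml iqk0 /z /= mul0n mod0n.
  by rewrite -modnMmr qm1 muln1 modn_small //; have := ltn_ord i; lia.
suff -> : coset_union q n m 0 d = z |: coset_union q n m 1 d.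
  by rewrite cardsU1 z_notin.
apply/setP => j; rewrite !inE; apply/existsP/orP => [[i /andP [_ j_i]] | ].
  have [i0 | i_gt0] := posnP i; last by right; apply/existsP; exists i; rewrite i_gt0.
  case/existsP: j_i => k /eqP Dj; left; apply/eqP/val_inj.
  by rewrite /= Dj i0 mul0n mod0n.
case=> [/eqP -> | /existsP [i /andP [_ j_i]]]; last by exists i.
exists (Ordinal d_gt0); apply/existsP; exists (Ordinal m_gt0).
by rewrite /= mul0n mod0n.
Qed.

Lemma sum_ndvdn q x : 0 < q -> \sum_(1 <= i < x.+1) ~~ (q %| i) = x - x %/ q.
Proof.
move=> q_gt0; elim: x => [|x IHx]; first by rewrite big_geq ?div0n.
rewrite big_nat_recr //= IHx (divnS _ q_gt0).
by have := leq_div x q; case: (q %| x.+1) => /=; lia.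
Qed.

Lemma card_ndvdn_le q n x : 0 < q -> x < n ->
  #|[set i : 'I_n | (0 < i <= x) && ~~ (q %| i)]| = x - x %/ q.
Proof.
move=> q_gt0 x_lt_n; rewrite -(sum_ndvdn x q_gt0) -sum1_card big_mkcond /=.
under eq_bigr => i _ do rewrite inE.
rewrite -(big_mkord xpredT (fun i => if (0 < i <= x) && ~~ (q %| i) then 1 else 0)).
rewrite (@big_cat_nat _ _ _ x.+1) //= [X in _ + X]big_nat_cond [X in _ + X]big1 ?addn0.
  rewrite big_ltn // big_nat_cond [RHS]big_nat_cond /=.
  by apply: eq_bigr => i /andP [/andP [i_gt0 i_le_x] _]; rewrite i_gt0 -ltnS i_le_x.
by move=> i /andP [/andP [x_lt_i _] _]; rewrite (leqNgt i x) x_lt_i andbF.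
Qed.

Lemma epsE q d : 0 < q -> eps q d = (d - 1) - (d - 1) %/ q.
Proof.
move=> q_gt0; rewrite /eps; move: (d - 1) => x.
rewrite (divn_eq x q); move: (x %/ q) (x %% q) (ltn_pmod x q_gt0) => a r r_lt_q.
rewrite [in RHS]divnMDl // [in RHS]divn_small // addn0.
case: q q_gt0 r_lt_q => // q' _ r_lt_q.
rewrite (_ : (a * q'.+1 + r) * (q'.+1 - 1) + q'.+1 - 1 = (a * q' + r) * q'.+1 + (q' - r)).
  by rewrite divnMDl // divn_small; lia.
nia.
Qed.

(* For n = (q^3+1)/2 these are the leaders of the q-cyclotomic cosets meeting
   [1, (q^2-1)/2]. *)
Definition leader q i := (0 < i <= q./2 * q) && ~~ (q %| i).

Section CyclotomicCosets.
Variables q n : nat.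
Hypotheses (q_odd : odd q) (q_gt1 : 1 < q) (n_def : n = (q ^ 3 + 1) %/ 2).
Local Notation M := (q./2 * q).
Local Notation h := ((q ^ 2 - 1) %/ 2).

Let u := q./2.
Let Dq : q = u.*2.+1. Proof. by rewrite /u -{1}(odd_double_half q) q_odd. Qed.
Let u_gt0 : 0 < u. Proof. by move: q_gt1; rewrite Dq; lia. Qed.
Let DM : M = 2 * u * u + u. Proof. by rewrite -/u {1}Dq; lia. Qed.
Let Dh : h = 2 * u * u + 2 * u.
Proof.
rewrite Dq (_ : u.*2.+1 ^ 2 - 1 = (2 * u * u + 2 * u) * 2) ?mulnK //.
by rewrite !expnS expn0; nia.
Qed.
Let Dn : n = 4 * u * u * u + 6 * u * u + 3 * u + 1.
Proof.
rewrite n_def Dq (_ : u.*2.+1 ^ 3 + 1 = (4 * u * u * u + 6 * u * u + 3 * u + 1) * 2) ?mulnK //.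
by rewrite !expnS expn0; nia.
Qed.
Let q3 : q ^ 3 + 1 = 2 * n.
Proof. by rewrite Dn Dq !expnS expn0; nia. Qed.

Lemma mul_expq3_mod y : 0 < y < n -> y * q ^ 3 %% n = n - y.
Proof.
move=> /andP [y_gt0 y_lt_n]; apply: (@modn_eq_rem _ _ (2 * y - 1)); first lia.
by move: q3; move: (q ^ 3) => Q; clear -y_gt0 y_lt_n; nia.
Qed.

Lemma half_sq_lt_n : h < n.
Proof. by rewrite Dh Dn; lia. Qed.

Lemma expq3_mod : q ^ 3 %% n = n - 1.
Proof. by rewrite -[q ^ 3]mul1n mul_expq3_mod //; have := half_sq_lt_n; lia. Qed.

Lemma expq6_mod : q ^ 6 %% n = 1.
Proof.
have n_gt1 : 1 < n by have := half_sq_lt_n; lia.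
by rewrite (_ : 6 = 3 + 3) // expnD -modnMml expq3_mod mul_expq3_mod; lia.
Qed.

Lemma mul_expq_mod6 x m : x * q ^ m %% n = x * q ^ (m %% 6) %% n.
Proof.
rewrite {1}(divn_eq m 6) expnD mulnCA -modnMml (mulnC (m %/ 6)) expnM.
by rewrite -modnXm expq6_mod exp1n modnMml mul1n.
Qed.

Lemma leader_lt i : leader q i -> i < M.
Proof.
case/andP => /andP [_ i_le_M] q_ndvd_i; rewrite ltn_neqAle i_le_M andbT.
by apply: contraNneq q_ndvd_i => ->; apply: dvdn_mull.
Qed.

Lemma leader_mulq_lt i : leader q i -> i * q + M < n.
Proof.
move=> Li; have le_iq : i.+1 * q <= M * q by rewrite leq_mul2r leader_lt ?orbT.
by move: le_iq; rewrite DM Dn Dq => le_iq; clear -le_iq; nia.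
Qed.

Lemma leader_mulq2_mid i : leader q i -> M < i * q ^ 2 %% n < n - M.
Proof.
move=> Li; have i_lt_M := leader_lt Li; case/andP: Li => _ q_ndvd_i.
have q_gt0 : 0 < q by lia.
have a_gt0 : 0 < i %% q by rewrite lt0n -/(dvdn q i).
have a_lt_q : i %% q < q by rewrite ltn_pmod.
have b_lt_u : i %/ q < u by rewrite ltn_divLR.
have Di : i * q ^ 2 = i %/ q * q ^ 3 + i %% q * q ^ 2.
  by rewrite {1}(divn_eq i q) mulnDl -mulnA -expnS.
have bq3 : i %/ q * q ^ 3 + i %/ q = 2 * (i %/ q * n).
  by rewrite -{2}[i %/ q]muln1 -mulnDr q3 mulnCA.
have DQ : q ^ 2 = 4 * u * u + 4 * u + 1 by rewrite Dq; lia.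
have aQ_ge : q ^ 2 <= i %% q * q ^ 2 by rewrite leq_pmull.
have aQ_le : i %% q * q ^ 2 <= u.*2 * q ^ 2 by rewrite leq_mul2r -ltnS -Dq a_lt_q orbT.
rewrite Di; move: Di bq3 DQ aQ_ge aQ_le b_lt_u a_gt0 a_lt_q.
move: (i %/ q) (i %% q) (q ^ 2) (q ^ 3) => b a Q Q3 Di bq3 DQ aQ_ge aQ_le b_lt_u a_gt0 a_lt_q.
have uQ : u * Q = 4 * u * u * u + 4 * u * u + u by rewrite DQ; lia.
have [a_le_u | u_lt_a] := leqP a u.
  have aQ_le_uQ : a * Q <= u * Q by rewrite leq_mul2r a_le_u orbT.
  rewrite (@modn_eq_rem _ _ (2 * b) (a * Q - b)); rewrite ?DM; lia.
have uQ_le_aQ : u.+1 * Q <= a * Q by rewrite leq_mul2r u_lt_a orbT.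
rewrite (@modn_eq_rem _ _ (2 * b + 1) (a * Q - b - n)); rewrite ?DM; lia.
Qed.

Lemma not_leader_mul_expq i k : leader q i -> 0 < k < 6 -> ~~ leader q (i * q ^ k %% n).
Proof.
move=> Li /andP [k_gt0 k_lt6].
have i_lt_M := leader_lt Li; have iq_lt := leader_mulq_lt Li.
have /andP [mid_lo mid_hi] := leader_mulq2_mid Li.
have i_gt0 : 0 < i by case/andP: Li => /andP [].
have M2_lt_n : M + M < n by rewrite DM Dn; lia.
suff : (k == 1) || (M < i * q ^ k %% n).
  case/orP => [/eqP -> | M_lt]; apply/negP => /andP [/andP [_ r_le_M] q_ndvd_r].
    by move: q_ndvd_r; rewrite expn1 modn_small ?dvdn_mull //; lia.
  by move: M_lt; rewrite ltnNge r_le_M.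
case: k k_gt0 k_lt6 => [|[|[|[|[|[|k]]]]]] // _ _ /=.
- by rewrite mul_expq3_mod //; lia.
- by rewrite (_ : 4 = 1 + 3) // expnD mulnA expn1 mul_expq3_mod //; lia.
by rewrite (_ : 5 = 2 + 3) // expnD mulnA -modnMml mul_expq3_mod //; lia.
Qed.

Lemma leader_mulq2_top i : M < i <= h ->
  exists2 j, leader q j && (j <= i) & j * q ^ 2 %% n = i.
Proof.
rewrite DM Dh => /andP [M_lt_i i_le_h]; pose c := h - i.
(* j = c q + (q+1)/2 works because q^3 = -1 and (q+1)/2 q^2 = h (mod n). *)
have Dc : c + i = 2 * u * u + 2 * u by rewrite /c Dh subnK.
have Duq : (u - 1) * q + u + 1 = 2 * u * u by rewrite Dq; clear -u_gt0; nia.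
have cq_le : c * q <= (u - 1) * q by apply: leq_mul; lia.
have Dx : (c * q + u.+1) * q ^ 2 = c * q ^ 3 + u.+1 * q ^ 2.
  by rewrite mulnDl -mulnA -expnS.
have cq3 : c * q ^ 3 + c = 2 * (c * n) by rewrite -{2}[c]muln1 -mulnDr q3 mulnCA.
have uq2 : u.+1 * q ^ 2 = n + 2 * u * u + 2 * u.
  by rewrite Dn Dq !expnS expn0; clear; nia.
exists (c * q + u.+1).
  rewrite /leader -/u DM /dvdn modnMDl modn_small ?Dq //; lia.
rewrite Dx (@modn_eq_rem _ _ (2 * c + 1) i) //; rewrite Dn; lia.
Qed.

Lemma leader_orbit_cover i : 0 < i <= h ->
  exists2 j, leader q j && (j <= i) & exists2 k, k < 6 & j * q ^ k %% n = i.
Proof.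
have h_lt_n := half_sq_lt_n.
elim: i {-2}i (leqnn i) => [|m IHm] i le_i_m /andP [i_gt0 i_le_h]; first lia.
case Li : (leader q i).
  exists i; first by rewrite Li leqnn.
  by exists 0; rewrite // expn0 muln1 modn_small //; lia.
have [/dvdnP [i' Di] | q_ndvd_i] := boolP (q %| i).
  have i'_gt0 : 0 < i' by move: i_gt0; rewrite Di muln_gt0 => /andP [].
  have i'_lt_i : i' < i by rewrite Di ltn_Pmulr.
  have [j /andP [Lj le_j_i'] [k _ Dk]] : exists2 j, leader q j && (j <= i') &
      exists2 k, k < 6 & j * q ^ k %% n = i' by apply: IHm; lia.
  exists j; first by rewrite Lj (leq_trans le_j_i' (ltnW i'_lt_i)).
  exists (k.+1 %% 6); first by rewrite ltn_pmod.
  by rewrite -mul_expq_mod6 expnSr mulnA -modnMml Dk -Di modn_small //; lia.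
have M_lt_i : M < i.
  by move: Li; rewrite /leader i_gt0 q_ndvd_i andbT /= => /negbT; rewrite -ltnNge.
have [j Lj Dj] := leader_mulq2_top (introT andP (conj M_lt_i i_le_h)).
by exists j => //; exists 2.
Qed.

Lemma leader_orbit_inj i1 i2 k1 k2 : leader q i1 -> leader q i2 -> k1 < 6 -> k2 < 6 ->
  i1 * q ^ k1 %% n = i2 * q ^ k2 %% n -> i1 = i2 /\ k1 = k2.
Proof.
move=> L1 L2 k1_lt6 k2_lt6 E.
have i2_lt_n : i2 < n by have := leader_mulq_lt L2; lia.
have E2 : i1 * q ^ ((k1 + (6 - k2)) %% 6) %% n = i2.
  rewrite -mul_expq_mod6 expnD mulnA -modnMml E modnMml -mulnA -expnD subnKC ?(ltnW k2_lt6) //.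
  by rewrite -modnMmr expq6_mod muln1 modn_small.
have [r0 | r_gt0] := posnP ((k1 + (6 - k2)) %% 6).
  have Ek : k1 = k2 by move: r0; clear -k1_lt6 k2_lt6; lia.
  by move: E2; rewrite r0 expn0 muln1 modn_small; [|have := leader_mulq_lt L1; lia].
have := not_leader_mul_expq L1 (introT andP (conj r_gt0 (ltn_pmod _ (isT : 0 < 6)))).
by rewrite E2 L2.
Qed.

Lemma card_coset_union1 d : d <= h.+1 ->
  #|coset_union q n 6 1 d| = 6 * #|[set i : 'I_n | leader q i && (i < d)]|.
Proof.
move=> d_le_h1; have h_lt_n := half_sq_lt_n.
have n_gt0 : 0 < n by lia.
set T := [set i : 'I_n | _].
pose f (ki : 'I_6 * 'I_n) : 'I_n := Ordinal (ltn_pmod (ki.2 * q ^ ki.1) n_gt0).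
have f_inj : {in setX [set: 'I_6] T &, injective f}.
  move=> [k1 i1] [k2 i2] /setXP [_]; rewrite inE => /andP [L1 _].
  case/setXP => _; rewrite inE => /andP [L2 _] /(congr1 val) /= E.
  by have [/val_inj -> /val_inj ->] := leader_orbit_inj L1 L2 (ltn_ord k1) (ltn_ord k2) E.
suff -> : coset_union q n 6 1 d = f @: setX [set: 'I_6] T.
  by rewrite card_in_imset // cardsX cardsT card_ord.
apply/setP => j; apply/idP/imsetP => [|[[k i] /setXP [_]]]; last first.
  rewrite inE => /andP [Li i_lt_d] ->; rewrite inE; apply/existsP.
  exists (Ordinal i_lt_d); case/andP: Li => /andP [-> _] _ /=.
  by apply/existsP; exists k.
rewrite inE => /existsP [i /andP [i_gt0 /existsP [k /eqP Dj]]].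
have i_le_h : i <= h by have := ltn_ord i; lia.
have [l /andP [Ll le_l_i] [k' _ Dl]] := leader_orbit_cover (introT andP (conj i_gt0 i_le_h)).
have l_lt_n : l < n by have := ltn_ord i; lia.
exists (Ordinal (ltn_pmod (k' + k) (isT : 0 < 6)), Ordinal l_lt_n).
  by rewrite !inE Ll /=; have := ltn_ord i; lia.
by apply/val_inj; rewrite /= Dj -Dl modnMml -mulnA -expnD -mul_expq_mod6.
Qed.

Lemma card_leaders_below d : d <= h.+1 ->
  #|[set i : 'I_n | leader q i && (i < d)]| = minn (d - 1) M - minn (d - 1) M %/ q.
Proof.
move=> d_le_h1; have M_lt_n : M < n by rewrite DM Dn; lia.
rewrite -(@card_ndvdn_le q n) ?(leq_ltn_trans (geq_minr _ _) M_lt_n) //; last lia.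
apply: eq_card => i; rewrite !inE /leader.
by case: (q %| i); rewrite ?andbF ?andbT //=; apply/idP/idP; lia.
Qed.

Lemma kdimE d : 2 <= d <= h.+1 ->
  kdim q d = (n%:Z - 6 * (minn (d - 1) M - minn (d - 1) M %/ q)%:Z)%R.
Proof.
move=> /andP [d_ge2 d_le_h1]; rewrite /kdim -n_def epsE; last lia.
have -> : (q - 3) %/ 2 = u - 1 by rewrite Dq; lia.
have -> : (q - 2) %/ 2 = u - 1 by rewrite Dq; lia.
have [d1_le_M | M_lt_d1] := leqP (d - 1) M.
  by rewrite ifT //; move: d1_le_M; rewrite DM Dh; lia.
rewrite ifF; last by move: M_lt_d1; rewrite DM Dh; lia.
have d1_div : (d - 1) %/ q = u.
  rewrite -(subnKC (ltnW M_lt_d1)) divnMDl ?divn_small ?addn0 //; last lia.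
  by move: d_le_h1; rewrite Dh DM Dq; lia.
by rewrite d1_div mulnK //; lia.
Qed.
End CyclotomicCosets.

Unset Implicit Arguments.

Theorem theorem5 (F : finFieldType) (L : fieldExtType F) (beta : L) (delta : nat) :
  let q := #|F| in
  let n := ((q ^ 3 + 1) %/ 2)%N in
  odd q ->
  n.-primitive_root beta ->
  (1 <= delta - 1 <= (q ^ 2 - 1) %/ 2)%N ->
  exists k : nat,
    [/\ k%:Z = kdim q delta,
        #|@bch_code F L n beta delta 1| = (q ^ k)%N,
        min_dist_ge (@bch_code F L n beta delta 1) delta,
        (#|@bch_code F L n beta delta.+1 0| * q)%N = (q ^ k)%N
      & min_dist_ge (@bch_code F L n beta delta.+1 0) (2 * delta)].
Proof.
move=> q n q_odd prim delta_range.
have q_gt1 : 1 < q := finNzRing_gt1 F.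
have n_def : n = (q ^ 3 + 1) %/ 2 := erefl.
have h_lt_n : (q ^ 2 - 1) %/ 2 < n := half_sq_lt_n q_odd q_gt1 n_def.
have delta_le : delta <= ((q ^ 2 - 1) %/ 2).+1 by lia.
set s := #|[set i : 'I_n | leader q i && (i < delta)]|.
have card1 : #|coset_union q n 6 1 delta| = 6 * s.
  by rewrite /s (card_coset_union1 q_odd q_gt1 n_def delta_le).
have card0 : #|coset_union q n 6 0 delta| = (6 * s).+1.
  by rewrite card_coset_union0 ?card1 ?(expq6_mod q_odd q_gt1 n_def) //; lia.
have s_def : s = minn (delta - 1) (q./2 * q) - minn (delta - 1) (q./2 * q) %/ q.
  by rewrite /s (card_leaders_below q_odd q_gt1 n_def delta_le).
have s_lt : 6 * s < n by rewrite -card0 -[n in _ <= n]card_ord max_card.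
exists (n - 6 * s); split.
- by rewrite s_def (kdimE q_odd q_gt1 n_def); lia.
- rewrite (card_bch_code prim (m := 6)) ?(expq6_mod q_odd q_gt1 n_def) //.
  by rewrite addKn card1.
- exact: bch_code_min_dist.
- rewrite (card_bch_code prim (m := 6)) ?(expq6_mod q_odd q_gt1 n_def) //.
  by rewrite add0n subn1 card0 -expnSr subnSK.
apply: (bch_code0_min_dist_double prim (m := 3)); first exact: expq3_mod q_odd q_gt1 n_def.
lia.
Qed.
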